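(* Let $H\in\mathbb{R}^{n\times n}$ be symmetric with $\lambda_{\min}(H)<0$ and unit eigenvector $v_1$ for $\lambda_{\min}(H)$, let $g\in\mathbb{R}^n$ with $g^\intercal v_1\neq0$, let $f(z)=\frac12z^\intercal Hz+g^\intercal z$ and $\beta=\|H\|_{\mathrm{op}}$. Let $0<\eta<1/\beta$ and $z_0=-\alpha\frac{g}{\|g\|}$ with $0<\alpha<\min\big(1,\frac{\|g\|^3}{|g^\intercal Hg|}\big)$, and let $z_{t+1}=z_t-\eta\nabla f(z_t)$. Then, as long as the iterates remain in the region $\|z_t\|<1$ (where the projected/proximal gradient step onto the unit ball coincides with this plain gradient step), $\|z_t\|$ is monotonically nondecreasing in $t$.
   Context: $\nabla f(z)=Hz+g$; $\|H\|_{\mathrm{op}}$ is the operator norm. *)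

From HB Require Import structures.
From mathcomp Require Import all_boot all_order all_algebra.
From mathcomp Require Import classical_sets reals.
Set Implicit Arguments. Unset Strict Implicit. Unset Printing Implicit Defensive.
Import Order.TTheory GRing.Theory Num.Theory.
Local Open Scope ring_scope.

Definition vnorm (R : realType) (n : nat) (v : 'cV[R]_n) : R :=
  Num.sqrt (\sum_(i < n) v i 0 ^+ 2).

Definition dotv (R : realType) (n : nat) (u v : 'cV[R]_n) : R :=
  (u^T *m v) 0 0.

Definition opnorm (R : realType) (n : nat) (H : 'M[R]_n) : R :=
  reals.sup [set r : R | exists x : 'cV[R]_n, vnorm x = 1 /\ r = vnorm (H *m x)]%classic.

Definition is_lambda_min (R : realType) (n : nat) (H : 'M[R]_n) (lam : R) : Prop :=
  eigenvalue H lam /\ forall mu : R, eigenvalue H mu -> lam <= mu.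

Definition quad_f (R : realType) (n : nat) (H : 'M[R]_n) (g z : 'cV[R]_n) : R :=
  2^-1 * dotv z (H *m z) + dotv g z.

Definition grad_f (R : realType) (n : nat) (H : 'M[R]_n) (g z : 'cV[R]_n) : 'cV[R]_n :=
  H *m z + g.

(* Let c = alpha / |g|, so that z_0 = -c g, and write S_a = I - a H
   ([gdmx H a]) for the matrix of a gradient step of size a; then
   z_{t+1} = S_eta z_t - eta g, and S_eta is positive semidefinite because
   eta |H|_op < 1.  The increments are
   u_t = z_{t+1} - z_t = -eta S_eta^t S_c g, and since
   |z_{t+1}|^2 = |z_t|^2 + 2 <z_t, u_t> + |u_t|^2 it suffices to show
   <z_t, u_t> >= 0.  All powers of S_eta are positive semidefinite, hence along
   any orbit y_{t+1} = S_eta y_t - eta x with y_0 = -c x we get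
   <y_t, S_eta^a x> <= 0 for every a.  If c <= eta, S_c is a nonnegative
   combination of I and S_eta, and this applies to y = z, x = g.  If c > eta,
   S_eta is a nonnegative combination of I and S_c, and an induction on t
   applies it to y = S_c z, x = S_c g; the base case is
   <g, S_c g> = |g|^2 - c <g, H g> > 0, which is the assumption on alpha. *)

From HB Require Import structures.
From mathcomp Require Import all_boot all_order all_algebra.
From mathcomp Require Import boolp classical_sets reals.
From mathcomp Require Import lra.
Import Order.TTheory GRing.Theory Num.Theory.
Local Open Scope ring_scope.

Section InnerProduct.
Context {R : realType} {n : nat}.
Implicit Types (u v w : 'cV[R]_n) (M : 'M[R]_n).

Lemma dotvE u v : dotv u v = \sum_i u i 0 * v i 0.
Proof. by rewrite /dotv !mxE; apply: eq_bigr => i _; rewrite !mxE. Qed.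

Lemma dotvC u v : dotv u v = dotv v u.
Proof. by rewrite !dotvE; apply: eq_bigr => i _; rewrite mulrC. Qed.

Lemma dotvDr u v w : dotv u (v + w) = dotv u v + dotv u w.
Proof. by rewrite !dotvE -big_split; apply: eq_bigr => i _; rewrite !mxE mulrDr. Qed.

Lemma dotvZr k u v : dotv u (k *: v) = k * dotv u v.
Proof. by rewrite !dotvE mulr_sumr; apply: eq_bigr => i _; rewrite !mxE mulrCA. Qed.

Lemma dotvNr u v : dotv u (- v) = - dotv u v.
Proof. by rewrite -scaleN1r dotvZr mulN1r. Qed.

Lemma dotvBr u v w : dotv u (v - w) = dotv u v - dotv u w.
Proof. by rewrite dotvDr dotvNr. Qed.

Lemma dotvDl u v w : dotv (u + v) w = dotv u w + dotv v w.
Proof. by rewrite dotvC dotvDr !(dotvC w). Qed.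

Lemma dotvZl k u v : dotv (k *: u) v = k * dotv u v.
Proof. by rewrite dotvC dotvZr dotvC. Qed.

Lemma dotvNl u v : dotv (- u) v = - dotv u v.
Proof. by rewrite dotvC dotvNr dotvC. Qed.

Lemma dotvBl u v w : dotv (u - v) w = dotv u w - dotv v w.
Proof. by rewrite dotvDl dotvNl. Qed.

Lemma dotv_mulmxl M u v : dotv (M *m u) v = dotv u (M^T *m v).
Proof. by rewrite /dotv trmx_mul mulmxA. Qed.

Lemma dotv_mulmxr M u v : dotv u (M *m v) = dotv (M^T *m u) v.
Proof. by rewrite dotvC dotv_mulmxl dotvC. Qed.

Lemma dotvv_ge0 u : 0 <= dotv u u.
Proof. by rewrite dotvE sumr_ge0 // => i _; rewrite -expr2 sqr_ge0. Qed.

Lemma dotvv_eq0 u : (dotv u u == 0) = (u == 0).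
Proof.
apply/eqP/eqP => [|->]; last by rewrite dotvE big1 // => i _; rewrite mxE mul0r.
rewrite dotvE => /psumr_eq0P u0; apply/matrixP => i j; rewrite (ord1 j) mxE.
by apply/eqP; rewrite -sqrf_eq0 expr2 u0 // => k _; rewrite -expr2 sqr_ge0.
Qed.

Lemma vnormE u : vnorm u = Num.sqrt (dotv u u).
Proof. by rewrite /vnorm dotvE; congr Num.sqrt; apply: eq_bigr => i _; rewrite expr2. Qed.

Lemma vnorm_ge0 u : 0 <= vnorm u.
Proof. exact: sqrtr_ge0. Qed.

Lemma sqr_vnorm u : vnorm u ^+ 2 = dotv u u.
Proof. by rewrite vnormE sqr_sqrtr ?dotvv_ge0. Qed.

Lemma vnorm_eq0 u : (vnorm u == 0) = (u == 0).
Proof. by rewrite vnormE sqrtr_eq0 le_eqVlt ltNge dotvv_ge0 orbF dotvv_eq0. Qed.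

Lemma vnorm0 : vnorm (0 : 'cV[R]_n) = 0.
Proof. by apply/eqP; rewrite vnorm_eq0. Qed.

Lemma vnormZ k u : vnorm (k *: u) = `|k| * vnorm u.
Proof. by rewrite !vnormE dotvZl dotvZr mulrA -expr2 sqrtrM ?sqr_ge0 // sqrtr_sqr. Qed.

Lemma vnorm_le_dotv u v : 0 <= dotv u (v - u) -> vnorm u <= vnorm v.
Proof.
move=> uvu; have -> : v = u + (v - u) by rewrite addrC subrK.
move: (v - u) uvu => d ud; have dd := dotvv_ge0 d.
by rewrite !vnormE ler_sqrt ?dotvv_ge0 // dotvDl !dotvDr (dotvC d u); lra.
Qed.

End InnerProduct.

Section OperatorNorm.
Context {R : realType} {n : nat} {M : 'M[R]_n}.
(* Spares proving that the set defining [opnorm M] is bounded: [sup] is 0 on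
   sets without supremum. *)
Hypothesis opnorm_gt0 : 0 < opnorm M.

Lemma vnorm_mulmx_le x : vnorm (M *m x) <= opnorm M * vnorm x.
Proof.
have [->|x0] := eqVneq x 0; first by rewrite mulmx0 vnorm0 mulr0.
have nx_gt0 : 0 < vnorm x by rewrite lt_def vnorm_eq0 x0 vnorm_ge0.
pose S := [set r | exists y : 'cV[R]_n, vnorm y = 1 /\ r = vnorm (M *m y)]%classic.
have [supS|/sup_out S0] := pselect (has_sup S); last first.
  by move: opnorm_gt0; rewrite /opnorm -/S S0 ltxx.
have x1 : vnorm ((vnorm x)^-1 *: x) = 1.
  by rewrite vnormZ ger0_norm ?invr_ge0 ?vnorm_ge0 // mulVf ?gt_eqF.
have := sup_upper_bound supS (ex_intro _ _ (conj x1 erefl)).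
by rewrite -/(opnorm M) -scalemxAr vnormZ ger0_norm ?invr_ge0 ?vnorm_ge0 // mulrC ler_pdivrMr.
Qed.

Lemma dotv_mulmx_le y : dotv y (M *m y) <= opnorm M * dotv y y.
Proof.
have := dotvv_ge0 (opnorm M *: y - M *m y).
have : dotv (M *m y) (M *m y) <= opnorm M ^+ 2 * dotv y y.
  rewrite -!sqr_vnorm -exprMn ler_pXn2r ?nnegrE ?vnorm_ge0 ?vnorm_mulmx_le //.
  by rewrite mulr_ge0 ?vnorm_ge0 ?ltW.
rewrite !(dotvBl, dotvBr, dotvZl, dotvZr) (dotvC (M *m y)) => MyMy yMy.
have : 2 * opnorm M * dotv y (M *m y) <= 2 * opnorm M * (opnorm M * dotv y y) by nra.
by rewrite ler_pM2l ?mulr_gt0.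
Qed.

End OperatorNorm.

Section PositiveSemidefinite.
Context {R : realType} {n : nat}.
Implicit Types (M : 'M[R]_n) (x : 'cV[R]_n).

Definition psdmx M := forall x, 0 <= dotv x (M *m x).

Lemma psdmx_exp M k : M^T = M -> psdmx M -> psdmx (M ^+ k).
Proof.
move=> MT Mpsd; elim/ltn_ind: k => -[_ x|[_ x|k IH x]].
- by rewrite expr0 mul1mx dotvv_ge0.
- by rewrite expr1.
have -> : M ^+ k.+2 *m x = M *m (M ^+ k *m (M *m x)).
  by rewrite !mulmxA !mulmxE -exprS -exprSr.
by rewrite dotv_mulmxr MT IH.
Qed.

Lemma affine_orbit_dotv_le0 {M x} {c e : R} {y : nat -> 'cV[R]_n} :
  M^T = M -> psdmx M -> 0 <= c -> 0 <= e ->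
  y 0%N = - c *: x -> (forall t, y t.+1 = M *m y t - e *: x) ->
  forall t a, dotv (y t) (M ^+ a *m x) <= 0.
Proof.
move=> MT Mpsd c_ge0 e_ge0 y0 yS; elim=> [|t IH] a.
  by rewrite y0 dotvZl mulNr oppr_le0 mulr_ge0 ?psdmx_exp.
rewrite yS dotvBl dotvZl dotv_mulmxl MT mulmxA mulmxE -exprS.
by rewrite subr_le0 (le_trans (IH a.+1)) ?mulr_ge0 ?psdmx_exp.
Qed.

End PositiveSemidefinite.

Section GradientMatrix.
Context {R : realType} {n : nat} (H : 'M[R]_n).

Definition gdmx (a : R) : 'M[R]_n := 1%:M - a *: H.

Lemma trmx_gdmx a : H^T = H -> (gdmx a)^T = gdmx a.
Proof. by move=> HT; rewrite /gdmx linearB /= trmx1 linearZ /= HT. Qed.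

Lemma gdmx_rescale a b : a != 0 -> gdmx b = (1 - b / a)%:M + (b / a) *: gdmx a.
Proof.
move=> a0; rewrite /gdmx scalerBr scalerA mulfVK // scalemx1 addrA.
by rewrite -raddfD /= subrK.
Qed.

Lemma gdmxC a b : gdmx a *m gdmx b = gdmx b *m gdmx a.
Proof.
rewrite /gdmx !mulmxBl !mulmxBr !mul1mx !mulmx1 -!scalemxAl -!scalemxAr !scalerA.
rewrite mulrC !opprB !addrA; set X := _ *: (H *m H).
by rewrite !(addrAC _ X) (addrAC 1%:M).
Qed.

Lemma grad_step g a z : z - a *: grad_f H g z = gdmx a *m z - a *: g.
Proof. by rewrite /grad_f /gdmx mulmxBl mul1mx -scalemxAl scalerDr opprD addrA. Qed.

Lemma psdmx_gdmx a : 0 < opnorm H -> 0 <= a -> a * opnorm H <= 1 -> psdmx (gdmx a).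
Proof.
move=> H_gt0 a_ge0 aH_le1 x.
rewrite mulmxBl mul1mx -scalemxAl dotvBr dotvZr.
have := dotv_mulmx_le H_gt0 x; have := dotvv_ge0 x.
nra.
Qed.

End GradientMatrix.

Section GradientIteration.
Context {R : realType} {n : nat} {H : 'M[R]_n} {g : 'cV[R]_n} {eta c : R}.
Context {z : nat -> 'cV[R]_n}.
Hypotheses (HT : H^T = H) (A_psd : psdmx (gdmx H eta)).
Hypotheses (eta_gt0 : 0 < eta) (c_gt0 : 0 < c).
Hypothesis z0 : z 0%N = - c *: g.
Hypothesis zS : forall t, z t.+1 = z t - eta *: grad_f H g (z t).

Local Notation A := (gdmx H eta).
Local Notation D := (gdmx H c).

Lemma iter_step t : z t.+1 = A *m z t - eta *: g.
Proof. by rewrite zS grad_step. Qed.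

Lemma iter_increment t : z t.+1 - z t = - eta *: (A ^+ t *m (D *m g)).
Proof.
elim: t => [|t IH].
  rewrite zS addrAC subrr add0r expr0 mul1mx /grad_f z0 -scalemxAr scaleNr.
  by rewrite /gdmx mulmxBl mul1mx -scalemxAl addrC scaleNr.
rewrite exprS -mulmxA scalemxAr -IH mulmxBr [z t.+2]iter_step (iter_step t).
by rewrite opprB addrA subrK.
Qed.

Lemma dotv_increment_ge0_small_c t : c <= eta -> 0 <= dotv (z t) (z t.+1 - z t).
Proof.
move=> c_le_eta.
have zA a := affine_orbit_dotv_le0 (trmx_gdmx _ _ HT) A_psd (ltW c_gt0) (ltW eta_gt0)
  z0 iter_step t a.
rewrite iter_increment (gdmx_rescale H eta c (lt0r_neq0 eta_gt0)) mulmxDl mul_scalar_mx.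
rewrite -scalemxAl mulmxDr -!scalemxAr mulmxA mulmxE -exprSr.
rewrite dotvZr mulNr oppr_ge0 pmulr_rle0 // dotvDr !dotvZr.
rewrite -oppr_ge0 opprD addr_ge0 // -mulrN mulr_ge0 ?oppr_ge0 //.
- by rewrite subr_ge0 ler_pdivrMr ?mul1r.
- by rewrite divr_ge0 ?ltW.
Qed.

Lemma dotv_increment_ge0_large_c t : eta < c -> c * dotv g (H *m g) < dotv g g ->
  0 <= dotv (z t) (z t.+1 - z t).
Proof.
move=> eta_lt_c gDg.
have DzS s : D *m z s.+1 = A *m (D *m z s) - eta *: (D *m g).
  by rewrite iter_step mulmxBr mulmxA gdmxC -mulmxA -scalemxAr.
have Dz0 : D *m z 0%N = - c *: (D *m g) by rewrite z0 scalemxAr.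
have DzA a s := affine_orbit_dotv_le0 (y := fun s => D *m z s) (trmx_gdmx _ _ HT) A_psd
  (ltW c_gt0) (ltW eta_gt0) Dz0 DzS s a.
elim: t => [|t IH].
  rewrite iter_increment expr0 mul1mx z0 dotvZl dotvZr mulrA mulrNN.
  rewrite /gdmx mulmxBl mul1mx -scalemxAl dotvBr dotvZr.
  by rewrite mulr_ge0 ?mulr_ge0 ?subr_ge0 ?ltW.
have uS : z t.+2 - z t.+1 = A *m (z t.+1 - z t).
  by rewrite !iter_increment exprS -mulmxA scalemxAr.
rewrite uS; set u := z t.+1 - z t.
have -> : z t.+1 = z t + u by rewrite /u addrC subrK.
rewrite dotvDl addr_ge0 ?A_psd // (gdmx_rescale H c eta (lt0r_neq0 c_gt0)).
rewrite mulmxDl mul_scalar_mx -scalemxAl dotvDr !dotvZr addr_ge0 // mulr_ge0 //.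
- by rewrite subr_ge0 ler_pdivrMr ?mul1r ?ltW.
- by rewrite divr_ge0 ?ltW.
rewrite dotv_mulmxr trmx_gdmx // /u iter_increment dotvZr mulNr oppr_ge0.
by rewrite pmulr_rle0 // DzA.
Qed.

Lemma dotv_increment_ge0 t : c * dotv g (H *m g) < dotv g g ->
  0 <= dotv (z t) (z t.+1 - z t).
Proof.
move=> gDg; have [c_le_eta|eta_lt_c] := lerP c eta.
  exact: dotv_increment_ge0_small_c.
exact: dotv_increment_ge0_large_c.
Qed.

End GradientIteration.

Theorem mainTheorem5 (R : realType) (n : nat) (H : 'M[R]_n) (g v1 : 'cV[R]_n)
    (lam eta alpha : R) (z : nat -> 'cV[R]_n) :
  H^T = H ->
  is_lambda_min H lam -> lam < 0 ->
  H *m v1 = lam *: v1 -> vnorm v1 = 1 ->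
  dotv g v1 != 0 ->
  0 < eta -> eta < 1 / opnorm H ->
  0 < alpha -> alpha < 1 -> alpha * `|dotv g (H *m g)| < vnorm g ^+ 3 ->
  z 0%N = - (alpha / vnorm g) *: g ->
  (forall t : nat, z t.+1 = z t - eta *: grad_f H g (z t)) ->
  forall T : nat, (forall t : nat, (t <= T)%N -> vnorm (z t) < 1) ->
  forall t : nat, (t < T)%N -> vnorm (z t) <= vnorm (z t.+1).
Proof.
move=> HT _ _ _ _ _ eta_gt0 eta_lt alpha_gt0 _ alpha_bound z0 zS _ _ t _.
have H_gt0 : 0 < opnorm H by rewrite -invr_gt0 -div1r (lt_trans eta_gt0).
have A_psd : psdmx (gdmx H eta).
  apply: psdmx_gdmx => //; first exact: ltW.
  by rewrite -ler_pdivlMr // ltW.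
have g_gt0 : 0 < vnorm g.
  rewrite lt_def vnorm_ge0 andbT; apply: contraTneq alpha_bound => ->.
  by rewrite expr0n /= -leNgt mulr_ge0 // ltW.
have gDg : alpha / vnorm g * dotv g (H *m g) < dotv g g.
  apply: (le_lt_trans (y := alpha / vnorm g * `|dotv g (H *m g)|)).
    by rewrite ler_wpM2l ?divr_ge0 ?real_ler_norm ?num_real // ltW.
  by rewrite mulrAC ltr_pdivrMr // -sqr_vnorm -exprSr.
apply: vnorm_le_dotv (dotv_increment_ge0 HT A_psd eta_gt0 _ z0 zS t gDg).
by rewrite divr_gt0.
Qed.
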